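(* Let $S$ be a random subset of a finite set $L$ and $T$ a random subset of a finite set $R$, and let $(l,r)\in L\times R$. Suppose that all events $\{l'\in S\}$ for $l'\ne l$ and all events $\{r'\in T\}$ for $r'\ne r$ are jointly independent of the event $\{(l,r)\in S\times T\}$. Let $s$ be an element of $S$ chosen uniformly at random and $t$ an element of $T$ chosen uniformly at random ($(s,t)$ is undefined if $S=\varnothing$ or $T=\varnothing$). Then $$\Pr[(l,r)=(s,t)]\ge\frac{\Pr[(l,r)\in S\times T]}{(\mathbb{E}[|S|]+1)(\mathbb{E}[|T|]+1)}.$$ *)

(* discrete probability on the finite space of outcomes
   (S, T) : {set L} * {set R}, given by its joint law P. *)
From mathcomp Require Import all_boot all_order all_algebra.
Set Implicit Arguments. Unset Strict Implicit. Unset Printing Implicit Defensive.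
Import Order.TTheory GRing.Theory Num.Theory.
Local Open Scope ring_scope.

Definition is_distr (K : realFieldType) (W : finType) (P : W -> K) : Prop :=
  (forall w, 0 <= P w) /\ \sum_(w : W) P w = 1.

Definition Pr (K : realFieldType) (W : finType) (P : W -> K) (A : pred W) : K :=
  \sum_(w : W | A w) P w.

Definition Ex (K : realFieldType) (W : finType) (P : W -> K) (X : W -> K) : K :=
  \sum_(w : W) P w * X w.

Definition inST (L Rs : finType) (l : L) (r : Rs) : pred ({set L} * {set Rs}) :=
  fun w => (l \in w.1) && (r \in w.2).

(* The events {l' \in S} (l' <> l) and {r' \in T} (r' <> r) are jointly
   independent of the event {(l,r) \in S x T}: every event of the
   sigma-algebra they generate, i.e. every event of the form
   F(S \ {l}, T \ {r}), is independent of {(l,r) \in S x T}. *)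
Definition others_indep (K : realFieldType) (L Rs : finType)
    (P : {set L} * {set Rs} -> K) (l : L) (r : Rs) : Prop :=
  forall F : {set L} -> {set Rs} -> bool,
    let G := fun w : {set L} * {set Rs} => F (w.1 :\ l) (w.2 :\ r) in
    Pr P (fun w => G w && inST l r w) = Pr P G * Pr P (inST l r).

(* Pr[(l,r) = (s,t)] where, given (S,T), s is uniform in S and t uniform in T
   (independently); outcomes with S or T empty contribute nothing. *)
Definition Pr_pick (K : realFieldType) (L Rs : finType)
    (P : {set L} * {set Rs} -> K) (l : L) (r : Rs) : K :=
  \sum_(w : {set L} * {set Rs} | inST l r w)
     P w / ((#|w.1|)%:R * (#|w.2|)%:R).

(* Since l and r lie in S and T whenever (s,t) = (l,r) is possible, we have
   |S| = |S \ {l}| + 1 and |T| = |T \ {r}| + 1 there, so by the independence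
   hypothesis Pr[(l,r) = (s,t)] = Pr[(l,r) \in S x T] * E[1/(a b)] with
   a = |S \ {l}| + 1 and b = |T \ {r}| + 1.  The function (x,y) |-> 1/(x y)
   is convex on the positive quadrant, so Jensen gives
   E[1/(a b)] >= 1/(E a * E b), and E a <= E|S| + 1, E b <= E|T| + 1. *)
From mathcomp Require Import all_boot all_order all_algebra.
From mathcomp Require Import ring lra.
Set Implicit Arguments. Unset Strict Implicit. Unset Printing Implicit Defensive.
Import Order.TTheory GRing.Theory Num.Theory.
Local Open Scope ring_scope.

(* AM-GM for the three numbers u, v and 3 - u - v. *)
Lemma amgm3_le1 (K : realFieldType) (u v : K) :
  0 < u -> 0 < v -> u * v * (3 - u - v) <= 1.
Proof.
move=> hu hv; have huv := mulr_gt0 hu hv.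
have [hw|hw] := lerP (3 - u - v) 0; first by nra.
have amgm2 : 4 * (u * v) <= (u + v) ^+ 2 by have := sqr_ge0 (u - v); nra.
have cubic : (u + v) ^+ 2 * (3 - u - v) <= 4.
  have : 0 <= (u + v - 2) ^+ 2 * (u + v + 1).
    by apply: mulr_ge0; [exact: sqr_ge0 | lra].
  nra.
nra.
Qed.

(* The tangent plane of (a, b) |-> 1/(a b) at (A, B) lies below its graph. *)
Lemma tangent_le_invfM (K : realFieldType) (a b A B : K) :
  0 < a -> 0 < b -> 0 < A -> 0 < B ->
  (3 - a / A - b / B) / (A * B) <= (a * b)^-1.
Proof.
move=> ha hb hA hB; have hab := mulr_gt0 ha hb.
rewrite -(ler_pM2l hab) mulfV ?gt_eqF //.
have -> : a * b * ((3 - a / A - b / B) / (A * B))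
          = a / A * (b / B) * (3 - a / A - b / B).
  by field; rewrite ?gt_eqF.
by apply: amgm3_le1; apply: divr_gt0.
Qed.

Section Expectation.

Variables (K : realFieldType) (W : finType) (P : W -> K).
Hypothesis P_distr : is_distr P.

Lemma Pr_ge0 (A : pred W) : 0 <= Pr P A.
Proof. by apply: sumr_ge0 => w _; case: P_distr. Qed.

Lemma ler_Ex (X Y : W -> K) : (forall w, X w <= Y w) -> Ex P X <= Ex P Y.
Proof. by move=> XY; apply: ler_sum => w _; apply: ler_wpM2l; [case: P_distr|]. Qed.

Lemma Ex_lin (c d e : K) (X Y : W -> K) :
  Ex P (fun w => c * X w + d * Y w + e) = c * Ex P X + d * Ex P Y + e.
Proof.
case: P_distr => _ P1; rewrite /Ex.
under eq_bigr do rewrite !mulrDr mulrCA [P _ * (d * _)]mulrCA.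
by rewrite !big_split -!mulr_sumr -mulr_suml P1 mul1r.
Qed.

Lemma ExD1 (X : W -> K) : Ex P (fun w => X w + 1) = Ex P X + 1.
Proof.
case: P_distr => _ P1; rewrite /Ex.
by under eq_bigr do rewrite mulrDr mulr1; rewrite big_split P1.
Qed.

Lemma Ex_gt0 (X : W -> K) : (forall w, 0 < X w) -> 0 < Ex P X.
Proof.
case: P_distr => P_ge0 P1 X_gt0.
have PX_ge0 w : true -> 0 <= P w * X w by move=> _; apply: mulr_ge0 (ltW _).
rewrite lt_def (sumr_ge0 _ PX_ge0) andbT; apply/eqP => /(psumr_eq0P PX_ge0) PX0.
have P_eq0 w : P w = 0.
  by apply/eqP; have /eqP := PX0 w isT; rewrite mulf_eq0 (gt_eqF (X_gt0 w)) orbF.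
by move: P1; rewrite big1 // => /eqP; rewrite eq_sym oner_eq0.
Qed.

(* Jensen's inequality for the convex function (x, y) |-> 1/(x y), obtained
   by averaging the tangent plane at (E a, E b). *)
Lemma Ex_invfM_ge (a b : W -> K) :
  (forall w, 0 < a w) -> (forall w, 0 < b w) ->
  (Ex P a * Ex P b)^-1 <= Ex P (fun w => (a w * b w)^-1).
Proof.
move=> a_gt0 b_gt0.
have A_gt0 := Ex_gt0 a_gt0; have B_gt0 := Ex_gt0 b_gt0.
set A := Ex P a in A_gt0 *; set B := Ex P b in B_gt0 *.
apply: le_trans (ler_Ex (fun w => tangent_le_invfM (a_gt0 w) (b_gt0 w) A_gt0 B_gt0)).
have -> : Ex P (fun w => (3 - a w / A - b w / B) / (A * B))
        = Ex P (fun w => - (A ^+ 2 * B)^-1 * a w + - (A * B ^+ 2)^-1 * b w + 3 / (A * B)).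
  by apply: eq_bigr => w _; congr (_ * _); field; rewrite ?gt_eqF.
rewrite Ex_lin -/A -/B (_ : _ + _ + _ = (A * B)^-1) //.
by field; rewrite ?gt_eqF.
Qed.

Lemma sum_by_fibres (V : finType) (Q : pred W) (p : W -> V) (g : V -> K) :
  \sum_(w | Q w) P w * g (p w) = \sum_v g v * Pr P (fun w => Q w && (p w == v)).
Proof.
rewrite (partition_big p predT) //; apply: eq_bigr => v _.
by rewrite mulr_sumr; apply: eq_bigr => w /andP[_ /eqP <-]; rewrite mulrC.
Qed.

End Expectation.

Section PickFromRandomSets.

Variables (K : realFieldType) (L Rs : finType) (P : {set L} * {set Rs} -> K).
Variables (l : L) (r : Rs).

Lemma others_indep_sum (F : {set L} -> {set Rs} -> K) :
  others_indep P l r ->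
  \sum_(w | inST l r w) P w * F (w.1 :\ l) (w.2 :\ r)
  = Pr P (inST l r) * Ex P (fun w => F (w.1 :\ l) (w.2 :\ r)).
Proof.
move=> indep; set p := fun w : {set L} * {set Rs} => (w.1 :\ l, w.2 :\ r).
rewrite (sum_by_fibres _ _ p (fun v => F v.1 v.2)).
rewrite /Ex (sum_by_fibres _ predT p (fun v => F v.1 v.2)) mulr_sumr.
apply: eq_bigr => v _; rewrite mulrCA; congr (_ * _).
rewrite mulrC -[RHS](indep (fun X Y => (X, Y) == v)).
by apply: eq_bigl => w; rewrite andbC.
Qed.

Lemma Pr_pickE :
  Pr_pick P l r = \sum_(w | inST l r w)
    P w * ((#|w.1 :\ l|%:R + 1) * (#|w.2 :\ r|%:R + 1))^-1.
Proof.
apply: eq_bigr => w /andP[lS rT].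
by rewrite (cardsD1 l w.1) (cardsD1 r w.2) lS rT !natrD !(addrC 1).
Qed.

End PickFromRandomSets.

Theorem mainTheorem10 (K : realFieldType) (L Rs : finType)
    (P : {set L} * {set Rs} -> K) (l : L) (r : Rs) :
  is_distr P ->
  others_indep P l r ->
  Pr P (inST l r) /
    ((Ex P (fun w => (#|w.1|)%:R) + 1) * (Ex P (fun w => (#|w.2|)%:R) + 1))
  <= Pr_pick P l r.
Proof.
move=> P_distr indep.
have n1_gt0 (n : nat) : 0 < n%:R + 1 :> K by rewrite ltr_wpDl.
have cardD1_le (T : finType) (x : T) (A : {set T}) : #|A :\ x|%:R <= #|A|%:R :> K.
  by rewrite ler_nat (cardsD1 x A) leq_addl.
rewrite Pr_pickE (others_indep_sum (fun X Y => ((#|X|%:R + 1) * (#|Y|%:R + 1))^-1)) //.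
rewrite ler_wpM2l ?Pr_ge0 //.
apply: le_trans (Ex_invfM_ge P_distr (fun w => n1_gt0 _) (fun w => n1_gt0 _)).
rewrite -!ExD1 // lef_pV2 ?posrE ?mulr_gt0 ?Ex_gt0 //.
apply: ler_pM; try exact/ltW/Ex_gt0.
  by apply: (ler_Ex P_distr) => w; rewrite lerD2r cardD1_le.
by apply: (ler_Ex P_distr) => w; rewrite lerD2r cardD1_le.
Qed.
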